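(* Let $N\ge2$ and let $(b,a)\in\mathcal{M}$ satisfy $S(b,a)=(b,a)$. Then (i) $I_k(b,a)=I_{N-k}(b,a)$ for all $1\le k\le N-1$; (ii) $\lambda_j(b,a)=-\lambda_{2N+1-j}(b,a)$ for all $1\le j\le 2N$; (iii) if $N$ is even, then $I_{N/2}(b,a)=0$ and $\lambda_N(b,a)=\lambda_{N+1}(b,a)=0$.
   Context: $\mathcal{M}=\mathbb{R}^N\times\mathbb{R}_{>0}^N$, indices mod $N$; $S(b,a)=(b',a')$ with $b'_j=-b_{N-j}$, $a'_j=a_{N-j-1}$. $y_1,y_2$ solve $a_{k-1}y(k-1)+b_ky(k)+a_ky(k+1)=\lambda y(k)$ with $y_1(0)=1,y_1(1)=0,y_2(0)=0,y_2(1)=1$; $\Delta_\lambda=y_1(N,\lambda)+y_2(N+1,\lambda)$; $\lambda_1\le\dots\le\lambda_{2N}$ are the roots of $\Delta_\lambda^2-4$ with multiplicity (the eigenvalues of the periodic and antiperiodic Jacobi matrices of $(b,a)$), satisfying $\lambda_1<\lambda_2\le\lambda_3<\dots<\lambda_{2N}$. Actions: $I_k=\frac1\pi\int_{\lambda_{2k}}^{\lambda_{2k+1}}\operatorname{arcosh}|\Delta_\lambda/2|\,d\lambda$ for $1\le k\le N-1$. *)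

From HB Require Import structures.
From mathcomp Require Import all_boot all_order all_algebra.
From mathcomp Require Import all_classical all_reals all_analysis.
Set Implicit Arguments. Unset Strict Implicit. Unset Printing Implicit Defensive.
Import Order.TTheory GRing.Theory Num.Theory.
Local Open Scope ring_scope.

Section Toda.
Variables (R : realType) (N : nat).

(* A point of M = R^N x R_{>0}^N is a pair (b, a) of functions 'I_N -> R;
   [per f k] reads f at index k mod N. *)
Definition per (f : 'I_N -> R) (k : nat) : R :=
  if @insub nat (fun i => i < N)%N 'I_N (modn k N) is Some i then f i else 0.

Definition in_M (b a : 'I_N -> R) : Prop := forall i, 0 < a i.

Definition Sinv (ba : ('I_N -> R) * ('I_N -> R)) : ('I_N -> R) * ('I_N -> R) :=
  (fun j : 'I_N => - per ba.1 (N - j)%N,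
   fun j : 'I_N => per ba.2 (N - j - 1)%N).

(* Solutions of a_{k-1} y(k-1) + b_k y(k) + a_k y(k+1) = lambda y(k), computed
   as polynomials in lambda: [ypair b a y0 y1 k] = (y(k), y(k+1)). *)
Fixpoint ypair (b a : 'I_N -> R) (y0 y1 : {poly R}) (k : nat) : {poly R} * {poly R} :=
  match k with
  | 0 => (y0, y1)
  | k'.+1 =>
      let p := ypair b a y0 y1 k' in
      (p.2, (per a k'.+1)^-1 *: (('X - (per b k'.+1)%:P) * p.2 - per a k' *: p.1))
  end.

Definition ysol (b a : 'I_N -> R) (y0 y1 : {poly R}) (k : nat) : {poly R} :=
  (ypair b a y0 y1 k).1.

Definition y1 b a := ysol b a 1 0.
Definition y2 b a := ysol b a 0 1.

Definition discr (b a : 'I_N -> R) : {poly R} := y1 b a N + y2 b a N.+1.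

Definition is_root_list (b a : 'I_N -> R) (s : seq R) : Prop :=
  [/\ sorted <=%R s, size s = (2 * N)%N &
      (discr b a) ^+ 2 - 4%:P = lead_coef ((discr b a) ^+ 2 - 4%:P) *: \prod_(x <- s) ('X - x%:P)].

Definition lambdas (b a : 'I_N -> R) : seq R := xget [::] [set s | is_root_list b a s].

(* lambda_j, 1-indexed: lambda_1 <= ... <= lambda_{2N} *)
Definition lam (b a : 'I_N -> R) (j : nat) : R := nth 0 (lambdas b a) j.-1.

Definition arcosh (x : R) : R := ln (x + Num.sqrt (x ^+ 2 - 1)).

Definition action (b a : 'I_N -> R) (k : nat) : R :=
  pi^-1 * Rintegral lebesgue_measure `[lam b a (2 * k)%N, lam b a (2 * k).+1]%classic
            (fun l => arcosh `|(discr b a).[l] / 2|).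

End Toda.

From HB Require Import structures.
From mathcomp Require Import all_boot all_order all_algebra.
From mathcomp Require Import all_classical all_reals all_analysis measurable_realfun.
From mathcomp Require Import ring lra zify.
Set Implicit Arguments. Unset Strict Implicit. Unset Printing Implicit Defensive.
Import Order.TTheory GRing.Theory Num.Theory.
Local Open Scope ring_scope.

(* The vector (y(k), y(k+1)) is propagated by 2x2 transfer matrices T_k(x), so
   Delta(x) is the trace of the monodromy T_N(x) ... T_1(x), a matrix of
   determinant 1.  A fixed point of S reverses the chain: T_j(x) is a multiple of
   the transpose of T_{2N-j}(-x), so the monodromy at x is a multiple of the
   transpose of a cyclic shift of the monodromy at -x, and comparing
   determinants gives Delta(x)^2 = Delta(-x)^2.  Hence the roots of Delta^2 - 4
   are symmetric about 0, which is (ii), and the substitution lambda |-> -lambda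
   in the action integrals gives (i).  For N even, T_N(0) and T_{N/2}(0) are both
   the rotation J = [[0,1],[-1,0]], which makes the monodromy at 0 of the form
   J X J (c X^T), a scalar matrix; so Delta(0)^2 = 4, 0 is some lambda_j, and by
   symmetry and sortedness lambda_N = lambda_{N+1} = 0. *)

Section Mat2.
Variable R : comPzRingType.

Record mat2 := Mat2 { m11 : R; m12 : R; m21 : R; m22 : R }.

Definition mul2 (A B : mat2) : mat2 :=
  Mat2 (m11 A * m11 B + m12 A * m21 B) (m11 A * m12 B + m12 A * m22 B)
       (m21 A * m11 B + m22 A * m21 B) (m21 A * m12 B + m22 A * m22 B).
Definition tr2 (A : mat2) : mat2 := Mat2 (m11 A) (m21 A) (m12 A) (m22 A).
Definition scale2 (c : R) (A : mat2) : mat2 :=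
  Mat2 (c * m11 A) (c * m12 A) (c * m21 A) (c * m22 A).
Definition trace2 (A : mat2) : R := m11 A + m22 A.
Definition det2 (A : mat2) : R := m11 A * m22 A - m12 A * m21 A.
Definition id2 : mat2 := Mat2 1 0 0 1.
Definition rot2 : mat2 := Mat2 0 1 (-1) 0.

Lemma mul2A A B C : mul2 A (mul2 B C) = mul2 (mul2 A B) C.
Proof. by case: A B C => ???? [????] [????]; congr Mat2; rewrite /=; ring. Qed.

Lemma mul1_2 A : mul2 id2 A = A.
Proof. by case: A => ????; congr Mat2; rewrite /=; ring. Qed.

Lemma mul2_1 A : mul2 A id2 = A.
Proof. by case: A => ????; congr Mat2; rewrite /=; ring. Qed.

Lemma tr2_mul A B : tr2 (mul2 A B) = mul2 (tr2 B) (tr2 A).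
Proof. by case: A B => ???? [????]; congr Mat2; rewrite /=; ring. Qed.

Lemma scale2_mul c d A B : mul2 (scale2 c A) (scale2 d B) = scale2 (c * d) (mul2 A B).
Proof. by case: A B => ???? [????]; congr Mat2; rewrite /=; ring. Qed.

Lemma trace2_mulC A B : trace2 (mul2 A B) = trace2 (mul2 B A).
Proof. by case: A B => ???? [????]; rewrite /trace2 /=; ring. Qed.

Lemma trace2Z c A : trace2 (scale2 c A) = c * trace2 A.
Proof. by case: A => ????; rewrite /trace2 /=; ring. Qed.

Lemma trace2_tr A : trace2 (tr2 A) = trace2 A.
Proof. by case: A. Qed.

Lemma det2M A B : det2 (mul2 A B) = det2 A * det2 B.
Proof. by case: A B => ???? [????]; rewrite /det2 /=; ring. Qed.

Lemma det2Z c A : det2 (scale2 c A) = c ^+ 2 * det2 A.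
Proof. by case: A => ????; rewrite /det2 /=; ring. Qed.

Lemma det2_tr A : det2 (tr2 A) = det2 A.
Proof. by case: A => ????; rewrite /det2 /=; ring. Qed.

Lemma rot2_conj_tr c X :
  mul2 rot2 (mul2 X (mul2 rot2 (scale2 c (tr2 X)))) = scale2 (- c * det2 X) id2.
Proof. by case: X => ????; congr Mat2; rewrite /det2 /=; ring. Qed.

Lemma sqr_trace2_scalar c : trace2 (scale2 c id2) ^+ 2 = 4 * det2 (scale2 c id2).
Proof. by rewrite /trace2 /det2 /=; ring. Qed.

End Mat2.

Lemma prodrN_seq (R : comPzRingType) (I : Type) (s : seq I) (F : I -> R) :
  \prod_(i <- s) - F i = (-1) ^+ size s * \prod_(i <- s) F i.
Proof.
elim: s => [|i s IH]; first by rewrite !big_nil mulr1.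
by rewrite !big_cons IH exprS /=; ring.
Qed.

Lemma poly_horner_eq (R : numDomainType) (p q : {poly R}) :
  (forall x, p.[x] = q.[x]) -> p = q.
Proof.
move=> pq; apply/eqP; rewrite -subr_eq0; apply/eqP.
apply: (@roots_geq_poly_eq0 _ _ [seq i%:R | i <- iota 0 (size (p - q))]).
- by apply/allP => x _; rewrite /root hornerD hornerN pq subrr.
- by rewrite map_inj_uniq ?iota_uniq // => i j /eqP; rewrite eqr_nat => /eqP.
- by rewrite size_map size_iota.
Qed.

Lemma nth_rev_opp (R : zmodType) (s : seq R) i : s = rev (map -%R s) ->
  (i < size s)%N -> nth 0 s i = - nth 0 s (size s - i.+1).
Proof.
move=> s_sym lt_is; rewrite {1}s_sym nth_rev size_map // (nth_map 0) //.
by rewrite ltn_subrL (leq_ltn_trans _ lt_is).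
Qed.

Lemma sorted_nth_opp_eq0 (R : realDomainType) (s : seq R) n :
  sorted <=%R s -> 0 \in s -> (n.+1 < size s)%N ->
  nth 0 s n = - nth 0 s n.+1 -> nth 0 s n = 0.
Proof.
move=> s_sorted s0 lt_n1s sn.
have le_s i j : (i <= j < size s)%N -> nth 0 s i <= nth 0 s j.
  case/andP=> le_ij lt_js; apply: (sorted_leq_nth le_trans lexx) => //.
  by rewrite inE (leq_ltn_trans le_ij lt_js).
have i_lt : (index 0%R s < size s)%N by rewrite index_mem.
have s_i : nth 0 s (index 0%R s) = 0 by rewrite nth_index.
have le_n := le_s n n.+1 (ltac:(lia)).
have [le_in|lt_ni] := leqP (index 0%R s) n.
- by have := le_s (index 0%R s) n (ltac:(lia)); rewrite s_i; lra.
- by have := le_s n.+1 (index 0%R s) (ltac:(lia)); rewrite s_i; lra.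
Qed.

Section IntegralReflection.
Local Open Scope classical_set_scope.
Variable R : realType.

Lemma ge0_integral_itv_reflect (g : R -> \bar R) : measurable_fun setT g ->
  (forall t, (0 <= g t)%E) -> forall x y : R,
  (\int[lebesgue_measure]_(t in `[x, y]) g t =
   \int[lebesgue_measure]_(t in `[(- y)%R, (- x)%R]) g (- t)%R)%E.
Proof.
move=> mg g_ge0 x y.
have -> : `[(- y)%R, (- x)%R] = (-%R : _ -> measurableTypeR R) @^-1` `[x, y].
  by rewrite opp_preimage_itvbndbnd.
rewrite -ge0_integral_pushforward //=; last exact: measurable_funS mg.
by apply: eq_measure_integral => //= A mA _; exact/esym/lebesgue_measureN.
Qed.

Lemma Rintegral_itv_reflect (f : R -> R) : measurable_fun setT f -> forall x y : R,
  \int[lebesgue_measure]_(t in `[x, y]) f t = \int[lebesgue_measure]_(t in `[- y, - x]) f (- t).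
Proof.
move=> mf x y; rewrite /Rintegral integralE [in RHS]integralE.
have mF : measurable_fun setT (EFin \o f) by apply/measurable_EFinP.
congr (fine (_ - _)).
- rewrite (ge0_integral_itv_reflect (measurable_funepos mF)); last by move=> t; exact: funepos_ge0.
  apply: eq_integral => t _.
  exact: esym (congr1 (fun F => F t) (funepos_comp (EFin \o f) (@GRing.opp R))).
- rewrite (ge0_integral_itv_reflect (measurable_funeneg mF)); last by move=> t; exact: funeneg_ge0.
  apply: eq_integral => t _.
  exact: esym (congr1 (fun F => F t) (funeneg_comp (EFin \o f) (@GRing.opp R))).
Qed.

Lemma measurable_arcosh_horner (p : {poly R}) :
  measurable_fun setT (fun l : R => arcosh `|p.[l] / 2|).
Proof.
apply: (measurableT_comp (@measurable_ln R)).
have mq : measurable_fun setT (fun l : R => `|p.[l] / 2|).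
  apply: measurableT_comp; first exact: normr_measurable.
  by apply: measurable_funM; [exact: measurable_poly | exact: measurable_cst].
apply: measurable_funD => //.
apply: (measurableT_comp (continuous_measurable_fun (@sqrt_continuous R))).
by apply: measurable_funB; [exact: measurable_funX | exact: measurable_cst].
Qed.

End IntegralReflection.

Section Transfer.
Variables (R : realType) (N : nat) (b a : 'I_N -> R).

(* T_j maps (y(j-1), y(j)) to (y(j), y(j+1)); [transfer_prod k n] is
   T_(k+n-1) ... T_k. *)
Definition transfer (j : nat) (x : R) : mat2 R :=
  Mat2 0 1 (- per a j.-1 / per a j) ((x - per b j) / per a j).

Fixpoint transfer_prod (k n : nat) (x : R) : mat2 R :=
  if n is n'.+1 then mul2 (transfer (k + n') x) (transfer_prod k n' x) else id2 R.

Lemma horner_ypair y0 y1 n x :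
  (ypair b a y0 y1 n).1.[x] =
    m11 (transfer_prod 1 n x) * y0.[x] + m12 (transfer_prod 1 n x) * y1.[x] /\
  (ypair b a y0 y1 n).2.[x] =
    m21 (transfer_prod 1 n x) * y0.[x] + m22 (transfer_prod 1 n x) * y1.[x].
Proof.
elim: n => [|n [IH1 IH2]] /=; first by rewrite !mul1r !mul0r addr0 add0r.
rewrite add1n; split; first by rewrite IH2 /=; ring.
rewrite hornerZ hornerD hornerN hornerM hornerZ hornerXsubC IH1 IH2 /=; ring.
Qed.

Lemma horner_discr x : (discr b a).[x] = trace2 (transfer_prod 1 N x).
Proof.
rewrite /discr /y1 /y2 /ysol hornerD.
have [-> _] := horner_ypair 1 0 N x; have [_ ->] := horner_ypair 0 1 N x.
by rewrite /trace2 !hornerC !mulr1 !mulr0 addr0 add0r.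
Qed.

Lemma transfer_prodSl k n x :
  transfer_prod k n.+1 x = mul2 (transfer_prod k.+1 n x) (transfer k x).
Proof.
elim: n => [|n IH]; first by rewrite /= addn0 mul2_1 mul1_2.
rewrite -[transfer_prod k n.+2 x]/(mul2 (transfer (k + n.+1) x) (transfer_prod k n.+1 x)).
by rewrite IH mul2A -addSnnS.
Qed.

Lemma transfer_prodD k n1 n2 x :
  transfer_prod k (n1 + n2) x = mul2 (transfer_prod (k + n1) n2 x) (transfer_prod k n1 x).
Proof.
elim: n2 => [|n IH] /=; first by rewrite addn0 mul1_2.
by rewrite addnS /= IH mul2A addnA.
Qed.

Lemma transfer_prod_mid k n x :
  transfer_prod k (n + n.+2) x = mul2 (transfer (k + n + n.+1) x)
    (mul2 (transfer_prod (k + n).+1 n x) (mul2 (transfer (k + n) x) (transfer_prod k n x))).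
Proof.
rewrite transfer_prodD.
rewrite -[transfer_prod (k + n) n.+2 x]/
  (mul2 (transfer (k + n + n.+1) x) (transfer_prod (k + n) n.+1 x)).
by rewrite transfer_prodSl !mul2A.
Qed.

Lemma per_mod (f : 'I_N -> R) k m : (k = m %[mod N]) -> per f k = per f m.
Proof. by rewrite /per => ->. Qed.

Lemma per_addN (f : 'I_N -> R) k : per f (k + N) = per f k.
Proof. by apply: per_mod; rewrite modnDr. Qed.

Lemma transfer_addN j x : (0 < j)%N -> transfer (j + N) x = transfer j x.
Proof.
move=> j_gt0; rewrite /transfer !per_addN.
have -> : ((j + N).-1 = j.-1 + N)%N by lia.
by rewrite per_addN.
Qed.

Lemma transfer_prod_addN k n x :
  (0 < k)%N -> transfer_prod (k + N) n x = transfer_prod k n x.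
Proof. by move=> k_gt0; elim: n => [|n IH] //=; rewrite IH addnAC transfer_addN //; lia. Qed.

Hypothesis N_gt0 : (0 < N)%N.
Hypothesis a_gt0 : in_M b a.

Lemma per_ord (f : 'I_N -> R) k : per f k = f (Ordinal (ltn_pmod k N_gt0)).
Proof.
rewrite /per; case: insubP => [i _ def_i|]; last by rewrite ltn_pmod.
by congr f; apply: val_inj; rewrite /= def_i.
Qed.

Lemma per_gt0 k : 0 < per a k.
Proof. by rewrite per_ord. Qed.

Lemma per_neq0 k : per a k != 0.
Proof. by rewrite gt_eqF ?per_gt0. Qed.

Lemma det_transfer_prod k n x : (0 < k)%N ->
  det2 (transfer_prod k n x) = per a k.-1 / per a (k + n).-1.
Proof.
move=> k_gt0; elim: n => [|n IH] /=.
  by rewrite addn0 divff ?per_neq0 // /det2 /=; ring.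
rewrite det2M IH /det2 /transfer /= addnS /=.
by field; rewrite !per_neq0.
Qed.

Lemma det_monodromy k x : (0 < k)%N -> det2 (transfer_prod k N x) = 1.
Proof.
move=> k_gt0; rewrite det_transfer_prod //.
have -> : ((k + N).-1 = k.-1 + N)%N by lia.
by rewrite per_addN divff ?per_neq0.
Qed.

Lemma trace_monodromy_shift k x : (0 < k)%N ->
  trace2 (transfer_prod k.+1 N x) = trace2 (transfer_prod k N x).
Proof.
move=> k_gt0.
have -> : transfer_prod k N x = mul2 (transfer_prod k.+1 N.-1 x) (transfer k x).
  by rewrite -transfer_prodSl prednK.
have -> : transfer_prod k.+1 N x = mul2 (transfer k x) (transfer_prod k.+1 N.-1 x).
  rewrite -{1}(prednK N_gt0) /= -(transfer_addN _ k_gt0).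
  by rewrite addSn -addnS prednK.
exact: trace2_mulC.
Qed.

Lemma trace_monodromy k x : (0 < k)%N ->
  trace2 (transfer_prod k N x) = trace2 (transfer_prod 1 N x).
Proof.
by case: k => // k _; elim: k => // k IH; rewrite trace_monodromy_shift.
Qed.

End Transfer.

Section Reflection.
Variables (R : realType) (N : nat) (b a : 'I_N -> R).
Hypothesis N_gt0 : (0 < N)%N.
Hypothesis a_gt0 : in_M b a.
Hypothesis S_fixed : Sinv (b, a) = (b, a).

Lemma per_b_reflect m : (m <= 2 * N)%N -> per b m = - per b (2 * N - m).
Proof.
move=> le_m2N; rewrite per_ord.
have -> : b (Ordinal (ltn_pmod m N_gt0)) = - per b (N - m %% N).
  have := congr1 (fun ba => ba.1 (Ordinal (ltn_pmod m N_gt0))) S_fixed.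
  by rewrite /Sinv /= => <-.
congr (- _); apply: per_mod; apply/eqP; rewrite -(eqn_modDr m).
have lt_mN := ltn_pmod m N_gt0.
by rewrite -modnDmr subnK ?(ltnW lt_mN) // modnn subnK // modnMl.
Qed.

Lemma per_a_reflect m : (m < 2 * N)%N -> per a m = per a (2 * N - 1 - m).
Proof.
move=> lt_m2N; rewrite per_ord.
have -> : a (Ordinal (ltn_pmod m N_gt0)) = per a (N - m %% N - 1).
  have := congr1 (fun ba => ba.2 (Ordinal (ltn_pmod m N_gt0))) S_fixed.
  by rewrite /Sinv /= => <-.
apply: per_mod; apply/eqP; rewrite -(eqn_modDr m.+1).
have lt_mN := ltn_pmod m N_gt0.
have -> : (N - m %% N - 1 + m.+1 = (N - m %% N - 1 + 1) + m)%N by lia.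
rewrite -modnDmr.
have -> : (N - m %% N - 1 + 1 + m %% N = N)%N by lia.
have -> : (2 * N - 1 - m + m.+1 = 2 * N)%N by lia.
by rewrite modnn modnMl.
Qed.

Lemma transfer_reflect j x : (0 < j < 2 * N)%N ->
  transfer b a j x = scale2 (- per a j.-1 / per a j) (tr2 (transfer b a (2 * N - j) (- x))).
Proof.
case/andP=> j_gt0 lt_j2N.
have a1 : per a (2 * N - j).-1 = per a j by rewrite (@per_a_reflect j) // subnAC subn1.
have a2 : per a (2 * N - j) = per a j.-1.
  rewrite [RHS](@per_a_reflect j.-1); last by lia.
  by have -> : (2 * N - 1 - j.-1 = 2 * N - j)%N by lia.
have b1 : per b (2 * N - j) = - per b j by rewrite (@per_b_reflect j) ?opprK //; lia.
rewrite /transfer a1 a2 b1; congr Mat2; rewrite /=; field.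
all: by rewrite ?(per_neq0 N_gt0 a_gt0).
Qed.

Lemma transfer_prod_reflect n x : (n < 2 * N)%N ->
  exists c, transfer_prod b a 1 n x = scale2 c (tr2 (transfer_prod b a (2 * N - n) n (- x))).
Proof.
elim: n => [|n IH] lt_n2N /=.
  by exists 1; congr Mat2; rewrite /=; ring.
have [c ->] := IH (ltnW lt_n2N).
rewrite transfer_reflect ?add1n; last by lia.
exists (- per a n / per a n.+1 * c).
rewrite scale2_mul -tr2_mul.
have -> : (2 * N - n = (2 * N - n.+1).+1)%N by lia.
by rewrite -transfer_prodSl.
Qed.

Lemma sqr_discrN x : (discr b a).[- x] ^+ 2 = (discr b a).[x] ^+ 2.
Proof.
rewrite !horner_discr.
have [c reflN] := @transfer_prod_reflect N x (ltac:(lia)).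
rewrite (_ : 2 * N - N = N)%N in reflN; last by lia.
have c2 : c ^+ 2 = 1.
  have := det_monodromy N_gt0 a_gt0 x (isT : 0 < 1)%N.
  by rewrite reflN det2Z det2_tr det_monodromy ?mulr1.
by rewrite reflN trace2Z trace2_tr trace_monodromy // exprMn c2 mul1r.
Qed.

Lemma normr_discrN x : `|(discr b a).[- x]| = `|(discr b a).[x]|.
Proof. by rewrite -[LHS]sqrtr_sqr -[RHS]sqrtr_sqr sqr_discrN. Qed.

Lemma transfer0_rot j : (0 < j <= N)%N -> (2 * N - j = j %[mod N])%N ->
  transfer b a j 0 = rot2 R.
Proof.
case/andP=> j_gt0 le_jN modj.
have bj : per b j = 0.
  have := @per_b_reflect j (ltac:(lia)); rewrite (per_mod b modj) => bj; lra.
have aj : per a j.-1 = per a j.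
  rewrite (@per_a_reflect j.-1); last by lia.
  by apply: per_mod; rewrite -modj; congr modn; lia.
rewrite /transfer bj aj; congr Mat2; rewrite /=; field.
all: exact: (per_neq0 N_gt0 a_gt0).
Qed.

Lemma sqr_discr0 : ~~ odd N -> (discr b a).[0] ^+ 2 = 4.
Proof.
(* With N = 2(m+1), the monodromy at 0 is T_N X T_(m+1) Y where, by
   reflection, Y is a multiple of the transpose of X. *)
move=> N_even; have [m eN] : exists m, N = (m.+1).*2.
  by exists (N./2).-1; move: (odd_double_half N); rewrite (negbTE N_even); lia.
have [c reflm] := @transfer_prod_reflect m 0 (ltac:(lia)).
rewrite oppr0 (_ : 2 * N - m = m.+2 + N)%N ?transfer_prod_addN // in reflm; last by lia.
have rotN : transfer b a N 0 = rot2 R.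
  apply: transfer0_rot; first lia.
  by rewrite (_ : 2 * N - N = N)%N //; lia.
have rotm : transfer b a m.+1 0 = rot2 R.
  apply: transfer0_rot; first lia.
  by rewrite (_ : 2 * N - m.+1 = m.+1 + N)%N ?modnDr //; lia.
have := det_monodromy N_gt0 a_gt0 0 (isT : 0 < 1)%N.
rewrite horner_discr.
have -> : transfer_prod b a 1 N 0 = transfer_prod b a 1 (m + m.+2) 0.
  by have -> : (m + m.+2 = N)%N by lia.
rewrite transfer_prod_mid add1n.
have -> : (m.+1 + m.+1 = N)%N by lia.
rewrite reflm rotN rotm rot2_conj_tr => <-.
by rewrite sqr_trace2_scalar mulr_natl.
Qed.

End Reflection.

Section Degree.
Variables (R : realType) (N : nat) (b a : 'I_N -> R).

Lemma size_ypairS y0 y1 n m : (size (ypair b a y0 y1 n).1 <= m)%N ->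
  (size (ypair b a y0 y1 n).2 <= m.+1)%N ->
  (size (ypair b a y0 y1 n.+1).1 <= m.+1)%N /\ (size (ypair b a y0 y1 n.+1).2 <= m.+2)%N.
Proof.
move=> size1 size2; split => //=.
apply: leq_trans (size_scale_leq _ _) _.
apply: leq_trans (size_polyD _ _) _; rewrite size_polyN geq_max; apply/andP; split.
  by apply: leq_trans (size_polyMleq _ _) _; rewrite size_XsubC add2n.
by apply: leq_trans (size_scale_leq _ _) _; apply: leq_trans size1 _; lia.
Qed.

Lemma size_y1 n : (0 < n)%N -> (size (y1 b a n) <= n)%N.
Proof.
case: n => // n _; rewrite /y1 /ysol.
suff [] : (size (ypair b a 1 0 n.+1).1 <= n)%N /\ (size (ypair b a 1 0 n.+1).2 <= n.+1)%N.
  by move=> ? _; lia.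
elim: n => [|n [size1 size2]]; last exact: size_ypairS.
split=> /=; first by rewrite size_poly0.
rewrite mulr0 sub0r; apply: leq_trans (size_scale_leq _ _) _.
by rewrite size_polyN; apply: leq_trans (size_scale_leq _ _) _; rewrite size_poly1.
Qed.

Hypothesis N_gt0 : (0 < N)%N.
Hypothesis a_gt0 : in_M b a.

Lemma size_y2 n : size (ypair b a 0 1 n).1 = n /\ size (ypair b a 0 1 n).2 = n.+1.
Proof.
elim: n => [|n [size1 size2]] /=; first by rewrite size_poly0 size_poly1.
split => //.
have y2_neq0 : ('X - (per b n.+1)%:P) * (ypair b a 0 1 n).2 != 0.
  by rewrite mulf_eq0 negb_or polyXsubC_eq0 -size_poly_eq0 size2.
rewrite size_scale ?invr_eq0 ?(per_neq0 N_gt0 a_gt0) // size_polyDl.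
  by rewrite size_mul ?polyXsubC_eq0 -?size_poly_eq0 ?size2 // size_XsubC.
rewrite size_polyN; apply: leq_ltn_trans (size_scale_leq _ _) _.
by rewrite size_mul ?polyXsubC_eq0 -?size_poly_eq0 ?size2 // size_XsubC size1.
Qed.

Lemma size_discr : size (discr b a) = N.+1.
Proof.
have [_ size2] := size_y2 N.
rewrite /discr addrC size_polyDl /y2 /ysol /= size2 // ltnS.
exact: size_y1.
Qed.

Lemma discr_sqr_sub4_neq0 : (discr b a) ^+ 2 - 4%:P != 0.
Proof.
have discr_neq0 : discr b a != 0 by rewrite -size_poly_eq0 size_discr.
rewrite -size_poly_eq0 size_polyDl expr2 size_mul // size_discr //; first lia.
by rewrite size_polyN; apply: leq_ltn_trans (size_polyC_leq1 _) _; lia.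
Qed.

End Degree.

Lemma lambdas_spec (R : realType) (N : nat) (b a : 'I_N -> R) :
  lambdas b a = [::] \/ is_root_list b a (lambdas b a).
Proof.
have [[s rl]|no_rl] := pselect (exists s, is_root_list b a s).
  by right; apply: (xgetPex [::] (P := [set s | is_root_list b a s])); exists s.
by left; rewrite /lambdas xgetPN // => s rl; apply: no_rl; exists s.
Qed.

Section Spectrum.
Variables (R : realType) (N : nat) (b a : 'I_N -> R).
Hypothesis N_gt0 : (0 < N)%N.
Hypothesis a_gt0 : in_M b a.

Lemma horner_discr_sqr_sub4 x :
  ((discr b a) ^+ 2 - 4%:P).[x] = (discr b a).[x] ^+ 2 - 4.
Proof. by rewrite hornerD hornerN horner_exp hornerC. Qed.

Lemma mem_root_list s x :
  is_root_list b a s -> (discr b a).[x] ^+ 2 = 4 -> x \in s.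
Proof.
case=> _ _ prod_roots discrx.
have := horner_discr_sqr_sub4 x; rewrite discrx subrr prod_roots hornerZ.
move/eqP; rewrite mulf_eq0 lead_coef_eq0 (negbTE (discr_sqr_sub4_neq0 N_gt0 a_gt0)) /=.
by rewrite -root_prod_XsubC.
Qed.

Hypothesis S_fixed : Sinv (b, a) = (b, a).

Lemma root_list_reflect s : is_root_list b a s -> s = rev (map -%R s).
Proof.
case=> s_sorted size_s prod_roots.
set P := (discr b a) ^+ 2 - 4%:P in prod_roots.
have lc_neq0 : lead_coef P != 0 by rewrite lead_coef_eq0 discr_sqr_sub4_neq0.
have prod_horner z : (\prod_(x <- s) ('X - x%:P)).[z] = \prod_(x <- s) (z - x).
  by rewrite horner_prod; apply: eq_bigr => x _; rewrite hornerXsubC.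
have P_horner z : P.[z] = lead_coef P * \prod_(x <- s) (z - x).
  by rewrite {1}prod_roots hornerZ prod_horner.
have : \prod_(x <- s) ('X - x%:P) = \prod_(x <- rev (map -%R s)) ('X - x%:P).
  apply: poly_horner_eq => y; apply: (mulfI lc_neq0).
  have -> : (\prod_(x <- rev (map -%R s)) ('X - x%:P)).[y] = \prod_(x <- s) - (- y - x).
    rewrite horner_prod big_rev big_map; apply: eq_bigr => x _.
    by rewrite hornerXsubC opprD !opprK.
  rewrite prod_horner -P_horner /P horner_discr_sqr_sub4 -sqr_discrN //.
  rewrite -horner_discr_sqr_sub4 -/P P_horner prodrN_seq size_s.
  by rewrite mulnC exprM sqrr_sign mul1r.
move/prod_XsubC_eq; apply: (sorted_eq le_trans le_anti) => //.
by rewrite rev_sorted sorted_map; apply: sub_sorted s_sorted => x y /=; rewrite lerN2.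
Qed.

Lemma lam_reflect j : (0 < j <= 2 * N)%N -> lam b a j = - lam b a (2 * N + 1 - j).
Proof.
case/andP=> j_gt0 le_j2N; rewrite /lam.
have [->|rl] := lambdas_spec b a; first by rewrite !nth_nil oppr0.
have [_ size_l _] := rl.
rewrite (nth_rev_opp (root_list_reflect rl)) size_l; last by lia.
by congr (- nth _ _ _); lia.
Qed.

Lemma lam_mid_eq0 : ~~ odd N -> lam b a N = 0 /\ lam b a N.+1 = 0.
Proof.
move=> N_even.
have lamN : lam b a N = - lam b a N.+1.
  by rewrite lam_reflect; [congr (- lam _ _ _); lia | lia].
suff lamN0 : lam b a N = 0 by split => //; move: lamN; rewrite lamN0; lra.
move: lamN; rewrite /lam /=.
have [->|rl] := lambdas_spec b a; first by rewrite !nth_nil.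
have [sorted_l size_l _] := rl.
move=> lamN; apply: (@sorted_nth_opp_eq0 _ _ N.-1) => //.
- exact: mem_root_list rl (sqr_discr0 N_gt0 a_gt0 S_fixed N_even).
- by rewrite prednK // size_l; lia.
- by rewrite prednK.
Qed.

End Spectrum.

Section Actions.
Variables (R : realType) (N : nat) (b a : 'I_N -> R).

Lemma action_eq0 k : lam b a (2 * k) = lam b a (2 * k).+1 -> action b a k = 0.
Proof. by move=> lam_eq; rewrite /action lam_eq set_itv1 Rintegral_set1 mulr0. Qed.

Lemma action_reflect k l :
  (forall x, `|(discr b a).[- x]| = `|(discr b a).[x]|) ->
  lam b a (2 * l) = - lam b a (2 * k).+1 -> lam b a (2 * l).+1 = - lam b a (2 * k) ->
  action b a k = action b a l.
Proof.
move=> discr_even lam_l lam_l1; rewrite /action lam_l lam_l1.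
rewrite [in RHS]Rintegral_itv_reflect ?opprK //; last exact: measurable_arcosh_horner.
congr (_ * Rintegral _ _ _); apply: funext => t.
by rewrite !normrM discr_even.
Qed.

End Actions.

Theorem corollary4p3 (R : realType) (N : nat) (b a : 'I_N -> R) :
  (2 <= N)%N -> in_M b a -> Sinv (b, a) = (b, a) ->
  [/\ (forall k : nat, (1 <= k <= N - 1)%N -> action b a k = action b a (N - k)),
      (forall j : nat, (1 <= j <= 2 * N)%N -> lam b a j = - lam b a (2 * N + 1 - j)) &
      (~~ odd N -> [/\ action b a (N./2) = 0, lam b a N = 0 & lam b a N.+1 = 0])].
Proof.
move=> le2N a_gt0 S_fixed; have N_gt0 : (0 < N)%N by lia.
have lamS := lam_reflect N_gt0 a_gt0 S_fixed.
split=> //.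
- move=> k k_range; apply: action_reflect (normr_discrN N_gt0 a_gt0 S_fixed) _ _.
  + by rewrite lamS; [congr (- lam _ _ _) | ]; lia.
  + by rewrite [in RHS]lamS ?opprK; [congr (lam _ _ _) | ]; lia.
- move=> N_even; have [lamN lamN1] := lam_mid_eq0 N_gt0 a_gt0 S_fixed N_even.
  have N2 : (2 * N./2 = N)%N.
    by move: (odd_double_half N); rewrite (negbTE N_even) add0n -mul2n.
  by split=> //; apply: action_eq0; rewrite N2 lamN lamN1.
Qed.
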